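(* Fix integers $t\ge1$, $C_1,\dots,C_t\ge1$, and $A_i,B_i$ with $0\le A_i\le C_i/2$, $0\le B_i\le C_i/2$ for all $i$, and an integer $m$. For each integer $N$ let $S_N$ be the set of tuples $(\mu_1,\dots,\mu_t;d_1,\dots,d_t)\in P^t\times\mathbb Z^t$ with $\sum_i d_i$ odd and $\sum_i C_i|\mu_i|+\sum_iC_i\binom{d_i}{2}+\sum_iA_id_i=N$, and let $T_N$ be the set of tuples $(\alpha_1,\dots,\alpha_t;e_1,\dots,e_t)\in P^t\times\mathbb Z^t$ with $\sum_ie_i$ odd and $\sum_iC_i|\alpha_i|+\sum_iC_i\binom{e_i}{2}+\sum_iB_ie_i+m=N$. Assume $m$ is such that the smallest $N$ with $T_N\neq\emptyset$ equals the second smallest $N$ with $S_N\ne\emptyset$. Let $k$ be the smallest $N$ with $S_N\ne\emptyset$. For each $N$ define $$u_N=\#\Big\{(d_1,\dots,d_t)\in\mathbb Z^t:\ \textstyle\sum d_i\text{ odd},\ \sum_iC_i\binom{d_i}{2}+\sum_iA_id_i=N\Big\}+|S_k|\cdot\#\Big\{(f_1,\dots,f_t)\in\mathbb Z^t:\ \textstyle\sum f_i\text{ odd},\ \sum_iC_i\frac{f_i(3f_i-1)}{2}+k=N\Big\},$$ $$v_N=\#\Big\{(e_1,\dots,e_t)\in\mathbb Z^t:\ \textstyle\sum e_i\text{ odd},\ \sum_iC_i\binom{e_i}{2}+\sum_iB_ie_i+m=N\Big\}+|S_k|\cdot\#\Big\{(f_1,\dots,f_t)\in\mathbb Z^t:\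 \textstyle\sum f_i\text{ even},\ \sum_iC_i\frac{f_i(3f_i-1)}{2}+k=N\Big\}.$$ (These are the cardinalities of the sets $U_N$, $V_N$ formed as disjoint unions of the first set with $|S_k|$ copies of the second set.) Then $|S_N|=|T_N|$ for all $N>k$ if and only if $u_N=v_N$ for all integers $N$.
   Context: $P$ denotes the set of all integer partitions into positive parts (including the empty partition); for a partition $\lambda$, $|\lambda|$ is the sum of its parts. For $d\in\mathbb Z$, $\binom{d}{2}=d(d-1)/2$. *)

From HB Require Import structures.
From mathcomp Require Import all_boot all_order all_algebra.
From Stdlib Require Import ClassicalEpsilon.
Set Implicit Arguments. Unset Strict Implicit. Unset Printing Implicit Defensive.
Import Order.TTheory GRing.Theory Num.Theory.
Local Open Scope ring_scope.

Definition is_partition (s : seq nat) : bool :=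
  sorted geq s && all (fun x => (0 < x)%N) s.

Definition binom2 (d : int) : int := ((d * (d - 1)) %/ 2)%Z.
Definition pent (f : int) : int := ((f * (3 * f - 1)) %/ 2)%Z.

Definition has_card (X : eqType) (P : X -> Prop) (n : nat) : Prop :=
  exists s : seq X, [/\ uniq s, size s = n & forall x, P x <-> x \in s].
Definition ncard (X : eqType) (P : X -> Prop) : nat :=
  epsilon (inhabits 0%N) (has_card P).

Definition is_least (P : int -> Prop) (n : int) : Prop :=
  P n /\ forall j, P j -> n <= j.
Definition is_second_least (P : int -> Prop) (n : int) : Prop :=
  P n /\ exists k, [/\ is_least P k, k < n & forall j, P j -> j != k -> n <= j].

(* The set {(mu;d) in P^t x Z^t : sum d odd, sum C|mu| + sum C binom(d,2) + sum A d + c = N}.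
   S_N = PDset C A 0 N, T_N = PDset C B m N. *)
Definition PDset (t : nat) (C A : 'I_t -> int) (c N : int)
    (x : {ffun 'I_t -> seq nat} * {ffun 'I_t -> int}) : Prop :=
  [/\ forall i, is_partition (x.1 i),
      ~~ (2 %| \sum_(i < t) x.2 i)%Z
    & \sum_(i < t) C i * (sumn (x.1 i))%:Z + \sum_(i < t) C i * binom2 (x.2 i)
        + \sum_(i < t) A i * x.2 i + c = N].

Definition Dset (t : nat) (C A : 'I_t -> int) (c N : int) (d : {ffun 'I_t -> int}) : Prop :=
  ~~ (2 %| \sum_(i < t) d i)%Z /\
  \sum_(i < t) C i * binom2 (d i) + \sum_(i < t) A i * d i + c = N.

Definition Fset (t : nat) (C : 'I_t -> int) (odd_par : bool) (k N : int)
    (f : {ffun 'I_t -> int}) : Prop :=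
  (~~ (2 %| \sum_(i < t) f i)%Z = odd_par) /\
  \sum_(i < t) C i * pent (f i) + k = N.

Definition u_N (t : nat) (C A : 'I_t -> int) (k N : int) : nat :=
  (ncard (Dset C A 0 N) + ncard (PDset C A 0 k) * ncard (Fset C true k N))%N.
Definition v_N (t : nat) (C A B : 'I_t -> int) (m k N : int) : nat :=
  (ncard (Dset C B m N) + ncard (PDset C A 0 k) * ncard (Fset C false k N))%N.

From HB Require Import structures.
From mathcomp Require Import all_boot all_order all_algebra.
From mathcomp Require Import zify ring.
From Stdlib Require Import ClassicalEpsilon FunctionalExtensionality PropExtensionality.
Import Order.TTheory GRing.Theory Num.Theory.
Set Implicit Arguments. Unset Strict Implicit. Unset Printing Implicit Defensive.
Local Open Scope ring_scope.

(* Write p(j) for the number of t-tuples of partitions mu with sum_i C_i |mu_i| = j,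
   D_A(n) (resp. D_B(n)) for the number of d in Z^t with odd sum and
   sum_i C_i binom(d_i,2) + A_i d_i = n (resp. sum_i C_i binom(d_i,2) + B_i d_i + m = n),
   and E(n) for the number of f with even sum minus the number with odd sum among those with
   sum_i C_i f_i(3f_i - 1)/2 = n.  In the language of power series:
   1. |S_N| = sum_j p(j) D_A(N - j) and |T_N| = sum_j p(j) D_B(N - j), by splitting
      (mu; d) into its two components ([PDset_conv]);
   2. sum_j p(j) E(n - j) = [n = 0], Euler's pentagonal theorem, proved bijectively with the
      Bressoud-Zeilberger sign-reversing involution applied at the first nonzero coordinate
      of a pair (mu, f) ([pentagonal_conv]);
   3. hence, with P E = 1, the identity S - T = P (D_A - D_B) gives
      S - T = |S_k| q^k  iff  D_A - D_B = |S_k| q^k E  ([conv_solve]).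
   Since S_N is empty below k and T_N is empty up to k (T starts at the second level of S),
   the left condition says |S_N| = |T_N| for N > k, and the right one says u_N = v_N. *)


Lemma has_cardE (X : eqType) (P : X -> Prop) n : has_card P n -> ncard P = n.
Proof.
move=> Pn; rewrite /ncard.
have := epsilon_spec (inhabits 0%N) (has_card P) (ex_intro _ n Pn).
move: (epsilon _ _) Pn => n' [s [us <- Ps]] [s' [us' <- Ps']].
apply/perm_size/uniq_perm => // x.
by apply/idP/idP => Hx; [apply/Ps/Ps' | apply/Ps'/Ps].
Qed.

Lemma ncard_ext (X : eqType) (P Q : X -> Prop) :
  (forall x, P x <-> Q x) -> ncard P = ncard Q.
Proof.
move=> PQ; congr ncard.
by apply: functional_extensionality => x; apply: propositional_extensionality.
Qed.

Lemma ncard0 (X : eqType) (P : X -> Prop) : (forall x, ~ P x) -> ncard P = 0%N.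
Proof. by move=> nP; apply: has_cardE; exists [::]; split => // x; split => // /nP. Qed.

Definition ind (b : bool) : int := if b then 1 else 0.

Lemma ind_and a b : ind (a && b) = ind a * ind b.
Proof. by case: a; case: b; rewrite /ind ?mul1r ?mul0r. Qed.

Lemma count_by_weight (X : eqType) (p : pred X) (w : X -> int) (s : seq X) (M n : int) :
  uniq s -> (forall x, p x -> w x <= M -> x \in s) -> n <= M ->
  (ncard (fun x => p x /\ w x = n))%:Z = \sum_(x <- s) ind (p x) * ind (w x == n).
Proof.
move=> us cover nM; pose q x := p x && (w x == n).
have -> : ncard (fun x => p x /\ w x = n) = count q s.
  apply: has_cardE; exists (filter q s); split; rewrite ?filter_uniq ?size_filter // => x.
  rewrite mem_filter /q; split => [[px wx]|/andP [/andP [px /eqP wx] _]] //.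
  by rewrite px wx eqxx cover // wx.
elim: s {us cover} => [|x s IH]; first by rewrite big_nil.
by rewrite big_cons /= PoszD IH -ind_and /q /ind; case: (_ && _).
Qed.

Definition int_range (M : nat) : seq int := [seq i%:Z - M%:Z | i <- iota 0 (M + M).+1].

Lemma mem_int_range M (z : int) : `|z| <= M%:Z -> z \in int_range M.
Proof. by move=> zM; apply/mapP; exists (absz (z + M%:Z)); rewrite ?mem_iota; lia. Qed.

Fixpoint lists_upto (l : nat) (vals : seq nat) : seq (seq nat) :=
  if l is l'.+1 then [::] :: [seq x :: s | x <- vals, s <- lists_upto l' vals]
  else [:: [::]].

Lemma mem_lists_upto l vals s :
  (size s <= l)%N -> all (mem vals) s -> s \in lists_upto l vals.
Proof.
elim: l s => [|l IH] [|x s] //= sl /andP [xv sv].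
by rewrite in_cons; apply/orP; right; apply/allpairsP; exists (x, s); rewrite xv IH.
Qed.

Definition ffun_over (t : nat) (X : choiceType) (e : seq X) : seq {ffun 'I_t -> X} :=
  [seq [ffun i => ssval (g i)] | g : {ffun 'I_t -> seq_sub e}].

Lemma ffun_over_uniq t (X : choiceType) (e : seq X) : uniq (ffun_over t e).
Proof.
rewrite map_inj_uniq ?enum_uniq // => g g' /ffunP gg'.
by apply/ffunP => i; have := gg' i; rewrite !ffunE => /val_inj.
Qed.

Lemma mem_ffun_over t (X : choiceType) (e : seq X) (f : {ffun 'I_t -> X}) :
  (forall i, f i \in e) -> f \in ffun_over t e.
Proof.
move=> fe; apply/mapP; exists [ffun i => (SeqSub (fe i) : seq_sub e)].
  by rewrite mem_enum.
by apply/ffunP => i; rewrite !ffunE.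
Qed.

(* [d(d-1)] and [f(3f-1)] are even, so [binom2] and [pent] are exact halves. *)
Lemma dvd2_mul_pred (z : int) : (2 %| z * (z - 1))%Z.
Proof.
apply/dvdzP; rewrite {1 2}(divz_eq z 2).
have [->|->] : (z %% 2 = 0)%Z \/ (z %% 2 = 1)%Z by lia.
  by exists ((z %/ 2)%Z * ((z %/ 2)%Z * 2 - 1)); ring.
by exists ((z %/ 2)%Z * ((z %/ 2)%Z * 2 + 1)); ring.
Qed.

Lemma binom2E d : binom2 d * 2 = d * (d - 1).
Proof. by rewrite /binom2 divzK // dvd2_mul_pred. Qed.

Lemma pentE f : pent f * 2 = f * (3 * f - 1).
Proof.
rewrite /pent divzK //.
have -> : f * (3 * f - 1) = f * (f - 1) + (f * f) * 2 by ring.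
by rewrite rpredD ?dvd2_mul_pred ?dvdz_mull.
Qed.

Lemma pent_ge_abs f : `|f|%:Z <= pent f.
Proof. by have := pentE f; nia. Qed.

Lemma pentS f : pent (f + 1) = pent f + 3 * f + 1.
Proof. by have := pentE f; have := pentE (f + 1); nia. Qed.

Lemma pentP f : pent (f - 1) = pent f - 3 * f + 2.
Proof. by have := pentE f; have := pentE (f - 1); nia. Qed.

Lemma weight_bounds (X c d : int) : 0 <= X -> 2 * X <= c -> 1 <= c ->
  0 <= c * binom2 d + X * d /\ `|d|%:Z - 1 <= c * binom2 d + X * d.
Proof.
move=> X0 XC c1; have twice := binom2E d.
have [d0|d0] := lerP 0 d.
  have h1 : d * (d - 1) <= c * (d * (d - 1)) by rewrite ler_peMl //; nia.
  have h2 : 0 <= X * d by apply: mulr_ge0.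
  have h3 : 2 * (d - 1) <= d * (d - 1) by nia.
  lia.
have h1 : 0 <= (c - 2 * X) * (- d) by apply: mulr_ge0; lia.
have h2 : d * d <= c * (d * d) by rewrite ler_peMl //; nia.
nia.
Qed.

Lemma geq_trans : transitive geq.
Proof. by move=> x y z /= yx zy; apply: leq_trans zy yx. Qed.

Lemma is_partitionE l : is_partition l = pairwise geq l && all (fun x => 0 < x)%N l.
Proof. by rewrite /is_partition sorted_pairwise //; apply: geq_trans. Qed.

Lemma partition_cons x l : is_partition (x :: l) ->
  [/\ is_partition l, (0 < x)%N & all (fun y => y <= x)%N l].
Proof.
rewrite !is_partitionE pairwise_cons /= => /andP [/andP [a b] /andP [c d]].
by split; rewrite ?b ?d.
Qed.

Lemma partition_behead l : is_partition l -> is_partition (behead l).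
Proof. by case: l => // x l /partition_cons []. Qed.

Lemma partition_part l y : is_partition l -> y \in l -> (0 < y <= head 0 l)%N.
Proof.
case: l => //= x l /partition_cons [pl x0 al]; rewrite in_cons.
case/orP => [/eqP ->|yl]; first by rewrite x0 /=.
rewrite (allP al y yl) andbT.
by move: pl; rewrite is_partitionE => /andP [_ /allP]; apply.
Qed.

Lemma sumn_pred s : all (fun x => 0 < x)%N s ->
  (sumn (map predn s))%:Z = (sumn s)%:Z - (size s)%:Z.
Proof. by elim: s => //= x s IH /andP [x0 /IH]; lia. Qed.

Lemma sumn_mapS s : sumn (map S s) = (sumn s + size s)%N.
Proof. by elim: s => //= x s ->; lia. Qed.

Lemma sumn_filter_pos s : sumn [seq x <- s | (0 < x)%N] = sumn s.
Proof. by elim: s => //= -[|x] s IH //=; rewrite IH. Qed.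

Lemma split_ones l : is_partition l ->
  [seq x <- l | (1 < x)%N] ++ nseq (size l - size [seq x <- l | (1 < x)%N]) 1%N = l.
Proof.
elim: l => //= x l IH /[dup] /partition_cons [pl x0 al] pxl.
case: ifP => x1 /=; first by rewrite subSS IH.
have ones y : y \in l -> y = 1%N.
  by move=> yl; have := partition_part (y := y) pxl; rewrite in_cons yl orbT /=; lia.
have -> : [seq y <- l | (1 < y)%N] = [::].
  by apply/eqP; rewrite -[_ == _]negbK -has_filter; apply/hasP => -[y /ones ->].
rewrite subn0 /=; congr cons; first lia.
by apply/esym/all_pred1P/allP => y /ones ->.
Qed.

Lemma partition_in_lists l M :
  is_partition l -> (sumn l <= M)%N -> l \in lists_upto M (iota 1 M).
Proof.
move=> pl lM; have pos : all (fun x => 0 < x)%N l by move: pl; rewrite is_partitionE => /andP [].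
apply: mem_lists_upto.
  by apply: leq_trans lM; elim: l {pl} pos => //= x l IH /andP [x0 /IH]; lia.
apply/allP => y yl; change (y \in iota 1 M); have := partition_part pl yl; rewrite mem_iota.
suff : (y <= sumn l)%N by lia.
by elim: l {pl lM pos} yl => //= x l IH; rewrite in_cons => /orP [/eqP ->|/IH]; lia.
Qed.

(* The Bressoud-Zeilberger involution on pairs [(f, l)] of an integer and a partition,
   a bijective proof of Euler's pentagonal theorem.  With [h] the largest part and [s]
   the number of parts of [l]: if [h <= s - 3f], it subtracts 1 from every part and
   adds a part [s - 3f - 1] ([bz_grow]); otherwise it removes the largest part, adds
   1 to every other part and appends [h + 3f - 2 - (s - 1)] parts equal to 1
   ([bz_shrink]).  It preserves [|l| + pent f] and changes [f] by one. *)
Definition bz_grow (f : int) (l : seq nat) : int * seq nat :=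
  (f + 1, [seq x <- absz ((size l)%:Z - 3 * f - 1)%R :: map predn l | (0 < x)%N]).

Definition bz_shrink (f : int) (l : seq nat) : int * seq nat :=
  (f - 1, map S (behead l) ++
            nseq (absz ((head 0%N l)%:Z + 3 * f - 2 - (size (behead l))%:Z)%R) 1%N).

Definition bz_cond (f : int) (l : seq nat) : bool := (head 0%N l)%:Z <= (size l)%:Z - 3 * f.

Definition bz (p : int * seq nat) : int * seq nat :=
  if bz_cond p.1 p.2 then bz_grow p.1 p.2 else bz_shrink p.1 p.2.

Definition bz_weight (p : int * seq nat) : int := (sumn p.2)%:Z + pent p.1.

Lemma bz_weight_ge0 p : 0 <= bz_weight p.
Proof. by have := pent_ge_abs p.1; rewrite /bz_weight; lia. Qed.

Lemma bz_weight_gt0 f l : is_partition l -> (f, l) != (0, [::]) -> 0 < bz_weight (f, l).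
Proof.
move=> pl nz; have := pent_ge_abs f; rewrite /bz_weight /=.
case: l pl nz => [|x l] pl nz /=.
  have fn : f != 0 by apply: contra nz => /eqP ->.
  lia.
by have [_ x0 _] := partition_cons pl; lia.
Qed.

Lemma bz_fst p : (bz p).1 = p.1 + 1 \/ (bz p).1 = p.1 - 1.
Proof. by rewrite /bz; case: ifP; [left | right]. Qed.

Lemma bz_grow_new_part f l : is_partition l -> (f, l) != (0, [::]) -> bz_cond f l ->
  0 <= (size l)%:Z - 3 * f - 1.
Proof.
rewrite /bz_cond; case: l => [|x l] pl nz /=.
  have fn : f != 0 by apply: contra nz => /eqP ->.
  lia.
by have [_ x0 _] := partition_cons pl; lia.
Qed.

Lemma bz_shrink_ones f l : ~~ bz_cond f l ->
  0 <= (head 0%N l)%:Z + 3 * f - 2 - (size (behead l))%:Z.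
Proof. by rewrite /bz_cond; case: l => [|x l] /=; lia. Qed.

Lemma bz_partition p : is_partition p.2 -> is_partition (bz p).2.
Proof.
case: p => f l /= pl; rewrite /bz; case: ifP => cond.
  rewrite /is_partition filter_all andbT; apply: sorted_filter; first exact: geq_trans.
  rewrite sorted_pairwise; last exact: geq_trans.
  rewrite pairwise_cons all_map pairwise_map; apply/andP; split.
    by apply/allP => y /(partition_part pl); move: cond; rewrite /bz_cond /=; lia.
  by move: pl; rewrite is_partitionE => /andP [pw _]; apply: sub_pairwise pw => x y /=; lia.
rewrite /=; have /andP [pw pos] : pairwise geq (behead l) && all (fun x => 0 < x)%N (behead l).
  by rewrite -is_partitionE partition_behead.
have ones_pw n : pairwise geq (nseq n 1%N).
  by elim: n => //= n ->; rewrite all_nseq /= orbT.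
rewrite is_partitionE pairwise_cat all_cat all_map pairwise_map ones_pw andbT.
rewrite (sub_pairwise _ pw) => [|x y /=]; last lia.
rewrite all_nseq orbT /= !andbT; apply/andP; split; last exact/allP.
by apply/allrelP => x y /mapP [z _ ->] /nseqP [-> _].
Qed.

Lemma bz_weight_inv p : is_partition p.2 -> p != (0, [::]) -> bz_weight (bz p) = bz_weight p.
Proof.
case: p => f l /= pl nz; rewrite /bz /bz_weight; case: ifP => cond.
  have := bz_grow_new_part pl nz cond.
  move: pl; rewrite is_partitionE sumn_filter_pos /= pentS => /andP [_ /sumn_pred].
  lia.
have := bz_shrink_ones (negbT cond).
rewrite /= sumn_cat sumn_mapS sumn_nseq mul1n pentP.
by case: l {pl nz cond} => [|x l] /=; lia.
Qed.

Lemma bz_nonzero p : is_partition p.2 -> p != (0, [::]) -> bz p != (0, [::]).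
Proof.
case: p => f l /= pl nz; apply/eqP => bz0.
have := bz_weight_inv (p := (f, l)) pl nz; have := bz_weight_gt0 pl nz.
by rewrite bz0 /bz_weight /= /pent mul0r div0z; lia.
Qed.

Lemma filter_pred_pos l :
  [seq x <- map predn l | (0 < x)%N] = map predn [seq x <- l | (1 < x)%N].
Proof. by elim: l => //= -[|[|x]] l ->. Qed.

(* Undoing a growing step: the new part [a = s - 3f - 1] is the largest one, and the
   other parts are the parts [> 1] of [l] minus one; shrinking restores [l]. *)
Lemma bz_shrink_grow f l : is_partition l -> (f, l) != (0, [::]) -> bz_cond f l ->
  bz (bz_grow f l) = (f, l).
Proof.
move=> pl nz cond; have a0 := bz_grow_new_part pl nz cond.
rewrite /bz_grow /= filter_pred_pos; set big := [seq x <- l | _].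
have big_size : (size big <= size l)%N by rewrite size_filter count_size.
have restore := split_ones pl; rewrite -/big in restore.
case: ifP => a_pos.
  rewrite /bz /bz_cond /= size_map ifF; last by move: cond; rewrite /bz_cond; lia.
  rewrite /bz_shrink /= addrK -map_comp map_id_in => [|x]; last by rewrite mem_filter /=; lia.
  by rewrite size_map -[in RHS]restore; congr (_, _ ++ nseq _ _); lia.
have big_nil : big = [::].
  apply/eqP; rewrite -[_ == _]negbK -has_filter; apply/hasP => -[y yl].
  by have := partition_part pl yl; move: cond; rewrite /bz_cond; lia.
rewrite big_nil /bz /bz_cond /= ifF; last by lia.
by rewrite /bz_shrink /= addrK -[in RHS]restore big_nil /=; congr (_, nseq _ _); lia.
Qed.

(* Undoing a shrinking step: the appended ones and the parts [x + 1] lose one, and the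
   removed largest part [h = (number of parts) - 3(f - 1) - 1] comes back. *)
Lemma bz_grow_shrink f l : is_partition l -> ~~ bz_cond f l -> bz (bz_shrink f l) = (f, l).
Proof.
move=> pl cond; have ones := bz_shrink_ones cond.
have head_le : (head 0%N (bz_shrink f l).2 <= (head 0%N l).+1)%N.
  case: l pl {cond ones} => [|x [|y l]] /=; try by case: (absz _).
  by case/partition_cons => _ _ /andP [].
rewrite /bz /bz_cond /bz_shrink /= size_cat size_map size_nseq ifT.
  rewrite /bz_grow /= subrK map_cat -map_comp map_id map_nseq /= filter_cat filter_nseq /= cats0.
  set h := absz _; have -> : h = head 0%N l by rewrite /h size_cat size_map size_nseq; lia.
  case: l pl {cond ones head_le h} => [|x l] pl //=.
  have [pl' -> _] := partition_cons pl; congr (_, _ :: _).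
  by apply/all_filterP; move: pl'; rewrite is_partitionE => /andP [].
by move: head_le; rewrite /bz_shrink /=; lia.
Qed.

Lemma bz_involutive p : is_partition p.2 -> p != (0, [::]) -> bz (bz p) = p.
Proof.
case: p => f l /= pl nz; rewrite {2}/bz /=.
by case: ifP => cond; [apply: bz_shrink_grow | apply: bz_grow_shrink; rewrite ?cond].
Qed.

Definition conv (a b : nat -> int) (n : nat) : int := \sum_(j < n.+1) a j * b (n - j)%N.

Lemma eq_conv (a a' b b' : nat -> int) n :
  (forall j, (j <= n)%N -> a j = a' j) -> (forall j, (j <= n)%N -> b j = b' j) ->
  conv a b n = conv a' b' n.
Proof. by move=> ea eb; apply: eq_bigr => j _; rewrite ea ?eb ?leq_subr // -ltnS. Qed.

Lemma convBr (a b b' : nat -> int) n :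
  conv a (fun j => b j - b' j) n = conv a b n - conv a b' n.
Proof. by rewrite /conv -sumrB; apply: eq_bigr => j _; rewrite mulrBr. Qed.

Lemma sum_ind_range (z : int) n :
  \sum_(j < n.+1) ind (z == j%:Z) = ind ((0 <= z) && (z <= n%:Z)).
Proof.
elim: n => [|n IH]; first by rewrite big_ord1 /ind /=; case: ifP; case: ifP; lia.
by rewrite big_ord_recr /= IH /ind; do 3 case: ifP; lia.
Qed.

Lemma conv_weighted (X Y : Type) (s1 : seq X) (s2 : seq Y) (g1 : X -> int) (g2 : Y -> int)
    (w1 : X -> int) (w2 : Y -> int) n :
  (forall x, 0 <= w1 x) -> (forall y, 0 <= w2 y) ->
  conv (fun j => \sum_(x <- s1) g1 x * ind (w1 x == j%:Z))
       (fun j => \sum_(y <- s2) g2 y * ind (w2 y == j%:Z)) n =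
  \sum_(x <- s1) \sum_(y <- s2) g1 x * g2 y * ind (w1 x + w2 y == n%:Z).
Proof.
move=> w1_ge0 w2_ge0; rewrite /conv.
under eq_bigr do rewrite big_distrl /=.
rewrite exchange_big /=; apply: eq_bigr => x _.
under eq_bigr do rewrite big_distrr /=.
rewrite exchange_big /=; apply: eq_bigr => y _.
have split_j (j : 'I_n.+1) : g1 x * ind (w1 x == j%:Z) * (g2 y * ind (w2 y == (n - j)%N%:Z)) =
    g1 x * g2 y * ind (w1 x + w2 y == n%:Z) * ind (w1 x == j%:Z).
  by have := ltn_ord j; rewrite /ind; do 3 case: ifP => ?; try ring; lia.
rewrite (eq_bigr _ (fun j _ => split_j j)) -big_distrr sum_ind_range /=.
by have := w1_ge0 x; have := w2_ge0 y; rewrite /ind; do 2 case: ifP => ?; try ring; lia.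
Qed.

Lemma sum_sign_reversing (X : eqType) (s : seq X) (P : pred X) (phi : X -> X) (g : X -> int) :
  uniq s -> (forall x, P x -> x \in s) -> (forall x, P x -> P (phi x)) ->
  (forall x, P x -> phi (phi x) = x) -> (forall x, P x -> g (phi x) = - g x) ->
  \sum_(x <- s | P x) g x = 0.
Proof.
move=> us sP Pphi phiK gphi; rewrite -big_filter; set r := filter P s.
have memr x : (x \in r) = P x by rewrite mem_filter andb_idr //; apply: sP.
have ur : uniq r by apply: filter_uniq.
have perm_phi : perm_eq r (map phi r).
  apply: uniq_perm => //.
    rewrite map_inj_in_uniq // => x y; rewrite !memr => Px Py e.
    by rewrite -(phiK x Px) e phiK.
  move=> x; apply/idP/mapP => [|[y yr ->]]; last by rewrite memr Pphi // -memr.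
  by rewrite memr => Px; exists (phi x); rewrite ?memr ?Pphi ?phiK.
have : \sum_(x <- r) g x = - \sum_(x <- r) g x.
  rewrite {1}(perm_big _ perm_phi) big_map -sumrN big_seq [RHS]big_seq.
  by apply: eq_bigr => x; rewrite memr => /gphi.
by move: (\sum_(x <- r) g x) => S; lia.
Qed.

Lemma le_sum_term (t : nat) (a : 'I_t -> int) j :
  (forall i, 0 <= a i) -> a j <= \sum_(i < t) a i.
Proof. by move=> a_ge0; rewrite (bigD1 j) //= lerDl sumr_ge0. Qed.

Section Tuples.
Variables (t : nat) (C : 'I_t -> int).
Hypothesis C_ge1 : forall i, 1 <= C i.

Local Notation parts := {ffun 'I_t -> seq nat}.
Local Notation ints := {ffun 'I_t -> int}.

Definition partitions (mu : parts) : bool := [forall i, is_partition (mu i)].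
Definition wP (mu : parts) : int := \sum_(i < t) C i * (sumn (mu i))%:Z.
Definition wF (f : ints) : int := \sum_(i < t) C i * pent (f i).
Definition odd_sum (f : ints) : bool := ~~ (2 %| \sum_(i < t) f i)%Z.
Definition sgn (f : ints) : int := if odd_sum f then -1 else 1.

Lemma weighted_ge (a : 'I_t -> int) j :
  (forall i, 0 <= a i) -> a j <= \sum_(i < t) C i * a i.
Proof.
move=> a_ge0; have C_ge0 i : 0 <= C i by have := C_ge1 i; lia.
apply: le_trans (le_sum_term j _) => [|i]; last by rewrite mulr_ge0.
by rewrite ler_peMl.
Qed.

Lemma wP_ge0 mu : 0 <= wP mu.
Proof. by apply: sumr_ge0 => i _; apply: mulr_ge0; have := C_ge1 i; lia. Qed.

Lemma wF_ge0 f : 0 <= wF f.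
Proof.
by apply: sumr_ge0 => i _; apply: mulr_ge0; have := C_ge1 i; have := pent_ge_abs (f i); lia.
Qed.

Definition small_parts (M : nat) : seq parts := ffun_over t (lists_upto M (iota 1 M)).
Definition small_ints (M : nat) : seq ints := ffun_over t (int_range M).

Lemma mem_small_parts (M : nat) mu :
  partitions mu -> wP mu <= M%:Z -> mu \in small_parts M.
Proof.
move=> /forallP pmu muM; apply: mem_ffun_over => i; apply: partition_in_lists => //.
by rewrite -lez_nat; apply: le_trans muM; exact: (@weighted_ge (fun i => (sumn (mu i))%:Z) i).
Qed.

Lemma mem_small_ints (M : nat) f : wF f <= M%:Z -> f \in small_ints M.
Proof.
move=> fM; apply: mem_ffun_over => i; apply: mem_int_range.
apply: le_trans (pent_ge_abs _) _; apply: le_trans fM.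
by apply: (@weighted_ge (fun i => pent (f i)) i) => j; have := pent_ge_abs (f j); lia.
Qed.

(* The number of tuples of partitions of weight [n], and the excess of even over odd
   [f] of pentagonal weight [n]: the coefficients of [prod 1/(q^C_i)_oo] and of its
   inverse [prod (q^C_i)_oo]. *)
Definition pcount (n : nat) : int := (ncard (fun mu => partitions mu /\ wP mu = n%:Z))%:Z.
Definition pent_excess (n : int) : int :=
  (ncard (Fset C false 0 n))%:Z - (ncard (Fset C true 0 n))%:Z.

Lemma pcount_sum (M n : nat) : (n <= M)%N ->
  pcount n = \sum_(mu <- small_parts M) ind (partitions mu) * ind (wP mu == n%:Z).
Proof.
move=> nM; apply: (count_by_weight (M := M%:Z)) => //; first exact: ffun_over_uniq.
exact: mem_small_parts.
Qed.

Lemma Fset_sum (M : nat) b n : n <= M%:Z ->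
  (ncard (Fset C b 0 n))%:Z = \sum_(f <- small_ints M) ind (odd_sum f == b) * ind (wF f == n).
Proof.
move=> nM; rewrite (@ncard_ext _ _ (fun f => odd_sum f == b /\ wF f = n)).
  by apply: count_by_weight nM; [apply: ffun_over_uniq | move=> f _; apply: mem_small_ints].
move=> f; rewrite /Fset addr0; split => -[ob wf]; split => //.
  by rewrite /odd_sum ob.
exact: (eqP ob).
Qed.

Lemma pent_excess_sum (M : nat) n : n <= M%:Z ->
  pent_excess n = \sum_(f <- small_ints M) sgn f * ind (wF f == n).
Proof.
move=> nM; rewrite /pent_excess !(Fset_sum _ nM) -sumrB; apply: eq_bigr => f _.
by rewrite /sgn /ind; case: odd_sum; case: (wF f == n); ring.
Qed.

Lemma Fset_empty b n : n < 0 -> ncard (Fset C b 0 n) = 0%N.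
Proof. by move=> n0; apply: ncard0 => f [_]; have := wF_ge0 f; rewrite /wF; lia. Qed.

(* The Bressoud-Zeilberger involution acts on a pair [(mu, f)] at the first coordinate
   [i] where [(f_i, mu_i) <> (0, [::])]; it fixes only the trivial pair [x0]. *)
Local Notation config := (parts * ints)%type.

Definition x0 : config := ([ffun _ => [::]], [ffun _ => 0]).
Definition nonzero_at (x : config) (i : 'I_t) : bool := (x.2 i, x.1 i) != (0, [::]).
Definition update (x : config) (i : 'I_t) (q : int * seq nat) : config :=
  ([ffun j => if j == i then q.2 else x.1 j], [ffun j => if j == i then q.1 else x.2 j]).
Definition Phi (x : config) : config :=
  if [pick i | nonzero_at x i] is Some i then update x i (bz (x.2 i, x.1 i)) else x.
Definition wPF (x : config) : int := wP x.1 + wF x.2.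

Lemma wPFE x : wPF x = \sum_(i < t) C i * bz_weight (x.2 i, x.1 i).
Proof. by rewrite /wPF /wP /wF -big_split /=; apply: eq_bigr => i _; rewrite /bz_weight; ring. Qed.

Lemma exists_nonzero x : x != x0 -> exists i, nonzero_at x i.
Proof.
move=> nx; apply/existsP; apply: contraR nx => /existsPn zero; apply/eqP.
case: x zero => mu f /= zero; congr pair; apply/ffunP => i; rewrite ffunE;
  by have := zero i; rewrite /nonzero_at negbK => /eqP [].
Qed.

Lemma wPF_gt0 x : partitions x.1 -> x != x0 -> 0 < wPF x.
Proof.
move=> /forallP px /exists_nonzero [i nzi]; rewrite wPFE.
have w_ge0 j : 0 <= C j * bz_weight (x.2 j, x.1 j).
  by apply: mulr_ge0; [have := C_ge1 j; lia | apply: bz_weight_ge0].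
apply: lt_le_trans (le_sum_term i w_ge0); apply: lt_le_trans (bz_weight_gt0 (px i) nzi) _.
by rewrite ler_peMl ?bz_weight_ge0.
Qed.

Lemma wPF_x0 : wPF x0 = 0.
Proof. by rewrite wPFE big1 // => i _; rewrite !ffunE /bz_weight /= /pent mul0r div0z mulr0. Qed.

Lemma partitions_Phi x : partitions x.1 -> partitions (Phi x).1.
Proof.
move=> px; rewrite /Phi; case: pickP => // i _; move/forallP: px => px; apply/forallP => j.
by rewrite ffunE; case: ifP => _; [apply: (@bz_partition (x.2 i, x.1 i)) | ]; apply: px.
Qed.

Lemma wPF_Phi x : partitions x.1 -> wPF (Phi x) = wPF x.
Proof.
move=> px; rewrite /Phi; case: pickP => // i nzi; move/forallP: px => px; rewrite !wPFE.
apply: eq_bigr => j _; rewrite !ffunE; case: eqVneq => [->|//].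
by rewrite -surjective_pairing bz_weight_inv //; apply: px.
Qed.

(* Updating coordinate [i] by [bz] keeps it nonzero, so [Phi] acts twice at [i]. *)
Lemma nonzero_update x i : partitions x.1 -> nonzero_at x i ->
  nonzero_at (update x i (bz (x.2 i, x.1 i))) =1 nonzero_at x.
Proof.
move=> /forallP px nzi j; have pi := px i; rewrite /nonzero_at in nzi *.
rewrite /update /= !ffunE; case: (eqVneq j i) => [->|//].
by rewrite -surjective_pairing bz_nonzero // nzi.
Qed.

Lemma Phi_involutive x : partitions x.1 -> Phi (Phi x) = x.
Proof.
move=> px; case E: [pick i | nonzero_at x i] => [i|]; last by rewrite /Phi !E.
have nzi : nonzero_at x i by move: E; case: pickP => // j nzj [<-].
rewrite {2}/Phi E {1}/Phi (eq_pick (nonzero_update px nzi)) E /update /= !ffunE eqxx.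
rewrite -surjective_pairing bz_involutive //=; last by move/forallP: px.
case: x {px E nzi} => mu f.
by congr (_, _); apply/ffunP => j; rewrite !ffunE; case: (eqVneq j i) => [->|].
Qed.

Lemma sum_update (f : ints) i a :
  \sum_(j < t) [ffun j => if j == i then a else f j] j = \sum_(j < t) f j + (a - f i).
Proof.
rewrite (bigD1 i) //= [in RHS](bigD1 i) //= ffunE eqxx.
rewrite (eq_bigr f) => [|j /negbTE ji]; last by rewrite ffunE ji.
by ring.
Qed.

(* [Phi] changes one coordinate of [f] by one, hence flips the sign. *)
Lemma sgn_Phi x : x != x0 -> sgn (Phi x).2 = - sgn x.2.
Proof.
move=> /exists_nonzero [i0 nz0]; rewrite /Phi.
case: pickP => [i _|]; last by move/(_ i0); rewrite nz0.
rewrite /sgn /odd_sum /update /= sum_update.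
by case: (bz_fst (x.2 i, x.1 i)) => /= ->; do 2 case: ifP => ?; lia.
Qed.

(* Pairs of total weight [n]
   are cancelled by [Phi], except the trivial pair when [n = 0]. *)
Theorem pentagonal_conv n : conv pcount (fun j => pent_excess j%:Z) n = (n == 0%N)%:R.
Proof.
rewrite (@eq_conv _
    (fun j => \sum_(mu <- small_parts n) ind (partitions mu) * ind (wP mu == j%:Z)) _
    (fun j => \sum_(f <- small_ints n) sgn f * ind (wF f == j%:Z))); first last.
- by move=> j jn; rewrite (pent_excess_sum (M := n)) // lez_nat.
- by move=> j jn; rewrite (pcount_sum jn).
rewrite conv_weighted; [|exact: wP_ge0 | exact: wF_ge0].
set s := [seq (mu, f) | mu <- small_parts n, f <- small_ints n].
have us : uniq s.
  by apply: allpairs_uniq; rewrite ?ffun_over_uniq // => -[? ?] [? ?] _ _ [-> ->].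
pose P (x : config) := partitions x.1 && (wPF x == n%:Z).
have sP x : P x -> x \in s.
  case: x => mu f /andP [pmu /eqP w]; rewrite /wPF /= in w.
  have := wP_ge0 mu; have := wF_ge0 f => wF0 wP0.
  by apply/allpairsP; exists (mu, f); rewrite /= mem_small_parts ?mem_small_ints //; lia.
have -> : \sum_(mu <- small_parts n) \sum_(f <- small_ints n)
    ind (partitions mu) * sgn f * ind (wP mu + wF f == n%:Z) = \sum_(x <- s | P x) sgn x.2.
  rewrite [RHS]big_mkcond /s big_allpairs; apply: eq_bigr => mu _; apply: eq_bigr => f _.
  by rewrite /P /wPF /=; case: partitions; case: (_ == _); rewrite /ind; ring.
case: (posnP n) => [n0|n_gt0].
  have Px x : P x = (x == x0).
    apply/idP/eqP => [/andP [px /eqP w]|->]; last by rewrite /P wPF_x0 n0 eqxx andbT;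
      apply/forallP => i; rewrite ffunE.
    by apply/eqP; apply: contraTT isT => /(wPF_gt0 px); rewrite w n0 ltxx.
  rewrite (eq_bigl _ _ Px) -big_filter filter_pred1_uniq ?big_seq1 ?sP ?Px //.
  by rewrite /sgn /odd_sum big1 ?dvdz0 // => i _; rewrite ffunE.
apply: (sum_sign_reversing (phi := Phi) us sP) => x /andP [px /eqP w].
- by rewrite /P partitions_Phi // wPF_Phi // w eqxx.
- exact: Phi_involutive.
- by apply: sgn_Phi; apply: contraTneq n_gt0 => x_x0; move: w; rewrite x_x0 wPF_x0; lia.
Qed.

Section OddWeights.
Variable X : 'I_t -> int.
Hypothesis X_bounds : forall i, 0 <= X i /\ 2 * X i <= C i.

Definition wD (d : ints) : int := \sum_(i < t) C i * binom2 (d i) + \sum_(i < t) X i * d i.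

Lemma wD_term_ge0 d i : 0 <= C i * binom2 (d i) + X i * d i.
Proof. by have [X0 XC] := X_bounds i; case: (weight_bounds (d i) X0 XC (C_ge1 i)). Qed.

Lemma wDE d : wD d = \sum_(i < t) (C i * binom2 (d i) + X i * d i).
Proof. by rewrite /wD big_split. Qed.

Lemma wD_ge0 d : 0 <= wD d.
Proof. by rewrite wDE; apply: sumr_ge0 => i _; apply: wD_term_ge0. Qed.

Lemma mem_small_ints_wD (M : nat) d : wD d <= M%:Z -> d \in small_ints M.+1.
Proof.
move=> dM; apply: mem_ffun_over => i; apply: mem_int_range.
have [X0 XC] := X_bounds i; have [_ d_le] := weight_bounds (d i) X0 XC (C_ge1 i).
by have := le_sum_term i (wD_term_ge0 d); rewrite /= -wDE; lia.
Qed.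

Lemma Dset_empty c N : N < c -> ncard (Dset C X c N) = 0%N.
Proof. by move=> Nc; apply: ncard0 => d [_]; have := wD_ge0 d; rewrite /wD; lia. Qed.

(* Splitting [(mu; d)] into its two components: [|S_N| = sum_j p(j) D(N - j)] where [D]
   counts the [d] with odd sum.  The offset [L <= c] makes all indices nonnegative. *)
Theorem PDset_conv (c L : int) (i : nat) : L <= c ->
  (ncard (PDset C X c (i%:Z + L)))%:Z =
  conv pcount (fun j => (ncard (Dset C X c (j%:Z + L)))%:Z) i.
Proof.
move=> Lc; pose wD' d := wD d + (c - L).
have cover_d (M : nat) d : wD' d <= M%:Z -> d \in small_ints M.+1.
  by move=> dM; apply: mem_small_ints_wD; rewrite /wD' in dM; lia.
rewrite (@eq_conv _
    (fun j => \sum_(mu <- small_parts i) ind (partitions mu) * ind (wP mu == j%:Z)) _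
    (fun j => \sum_(d <- small_ints i.+1) ind (odd_sum d) * ind (wD' d == j%:Z))); first last.
- move=> j ji; rewrite (@ncard_ext _ _ (fun d => odd_sum d /\ wD' d = j%:Z)).
    apply: (count_by_weight (M := i%:Z)); rewrite ?ffun_over_uniq ?lez_nat //.
    by move=> d _ /cover_d.
  by move=> d; rewrite /Dset /wD' /wD; split => -[od e]; split => //; lia.
- by move=> j ji; rewrite (pcount_sum ji).
rewrite conv_weighted => [|mu|d]; last 2 first.
- exact: wP_ge0.
- by have := wD_ge0 d; rewrite /wD'; lia.
set s := [seq (mu, d) | mu <- small_parts i, d <- small_ints i.+1].
rewrite (@ncard_ext _ _ (fun x => (partitions x.1 && odd_sum x.2) /\ wP x.1 + wD' x.2 = i%:Z)).
  rewrite (@count_by_weight _ _ _ s i%:Z) //.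
  - rewrite /s big_allpairs; apply: eq_bigr => mu _; apply: eq_bigr => d _.
    by rewrite !ind_and; ring.
  - by apply: allpairs_uniq; rewrite ?ffun_over_uniq // => -[? ?] [? ?] _ _ [-> ->].
  - move=> [mu d] /andP [pmu od] /=; rewrite /wD' => w.
    have := wP_ge0 mu; have := wD_ge0 d => wD0 wP0.
    apply/allpairsP; exists (mu, d).
    by rewrite /= mem_small_parts ?cover_d //; rewrite /wD'; lia.
move=> [mu d]; rewrite /PDset /wD' /wP /wD /=; split.
  by move=> [pmu od e]; split; [apply/andP; split; [apply/forallP |] | lia].
by move=> [/andP [/forallP pmu od] e]; split => //; lia.
Qed.
End OddWeights.
End Tuples.

(* Power series over [int] are handled through their truncations modulo [q^(n+1)]. *)
Definition trunc (n : nat) (a : nat -> int) : {poly int} := \poly_(j < n.+1) a j.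
Definition eqmod (n : nat) (p q : {poly int}) : Prop := forall i, (i <= n)%N -> p`_i = q`_i.

Lemma coef_trunc n a i : (i <= n)%N -> (trunc n a)`_i = a i.
Proof. by move=> ni; rewrite coef_poly ltnS ni. Qed.

Lemma eqmod_trans n p q r : eqmod n p q -> eqmod n q r -> eqmod n p r.
Proof. by move=> pq qr i ni; rewrite pq ?qr. Qed.

Lemma eqmod_sym n p q : eqmod n p q -> eqmod n q p.
Proof. by move=> pq i ni; rewrite pq. Qed.

Lemma eqmodMl n p p' q : eqmod n p p' -> eqmod n (p * q) (p' * q).
Proof.
move=> pp' i ni; rewrite !coefM; apply: eq_bigr => j _.
by rewrite pp' // (leq_trans _ ni) // -ltnS.
Qed.

Lemma eqmodMr n p q q' : eqmod n q q' -> eqmod n (p * q) (p * q').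
Proof. by move=> qq'; rewrite ![p * _]mulrC; apply: eqmodMl. Qed.

Lemma trunc_conv n a b : eqmod n (trunc n a * trunc n b) (trunc n (conv a b)).
Proof.
move=> i ni; rewrite coefM coef_trunc //; apply: eq_bigr => j _.
have ji : (j <= i)%N by rewrite -ltnS.
by rewrite !coef_trunc // (leq_trans _ ni) // leq_subr.
Qed.

Lemma eqmod_inverse n P E A S Q : eqmod n (P * E) 1 -> eqmod n (P * A) S ->
  eqmod n S Q <-> eqmod n A (E * Q).
Proof.
move=> PE PA; split => [SQ|AEQ].
  apply: (@eqmod_trans _ _ (E * P * A)).
    by rewrite -{1}(mul1r A); apply: eqmodMl; rewrite mulrC; apply: eqmod_sym.
  by rewrite -mulrA; apply: eqmodMr; apply: eqmod_trans PA SQ.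
apply: eqmod_trans (eqmod_sym PA) _; apply: eqmod_trans (eqmodMr _ AEQ) _.
by rewrite mulrA -{2}(mul1r Q); apply: eqmodMl.
Qed.

Lemma coef_monomial (c : int) K i : (c%:P * 'X^K)`_i = c * (i == K)%:R.
Proof.
rewrite coefMXn coefC; case: (ltngtP i K) => [iK|iK|->].
- by rewrite mulr0.
- by rewrite subn_eq0 leqNgt iK mulr0.
- by rewrite subnn mulr1.
Qed.

Lemma coef_shift n (e : nat -> int) c K i : (i <= n)%N ->
  (trunc n e * (c%:P * 'X^K))`_i = if (i < K)%N then 0 else c * e (i - K)%N.
Proof.
move=> ni; rewrite mulrA coefMXn; case: ltnP => // _.
by rewrite coefMC coef_trunc 1?mulrC // (leq_trans (leq_subr _ _) ni).
Qed.

Lemma conv_solve (p e a s : nat -> int) (c : int) (K : nat) :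
  (forall n, conv p e n = (n == 0%N)%:R) -> (forall n, s n = conv p a n) ->
  (forall n, s n = c * (n == K)%:R) <->
  (forall n, a n = if (n < K)%N then 0 else c * e (n - K)%N).
Proof.
move=> pe_unit s_conv.
have key n : eqmod n (trunc n s) (c%:P * 'X^K) <->
             eqmod n (trunc n a) (trunc n e * (c%:P * 'X^K)).
  apply: (eqmod_inverse (P := trunc n p)).
    by move=> i ni; rewrite (@trunc_conv n p e i ni) coef_trunc // pe_unit coef1.
  by move=> i ni; rewrite (@trunc_conv n p a i ni) !coef_trunc // s_conv.
split => H n.
  have /key an : eqmod n (trunc n s) (c%:P * 'X^K).
    by move=> i ni; rewrite coef_trunc // H coef_monomial.
  by have := an n (leqnn n); rewrite coef_trunc // coef_shift.
have /key sn : eqmod n (trunc n a) (trunc n e * (c%:P * 'X^K)).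
  by move=> i ni; rewrite coef_trunc // H coef_shift.
by have := sn n (leqnn n); rewrite coef_trunc // coef_monomial.
Qed.

Lemma least_empty (X : eqType) (Q : int -> X -> Prop) N0 N :
  is_least (fun N => exists x, Q N x) N0 -> N < N0 -> ncard (Q N) = 0%N.
Proof.
by move=> [_ least] NN0; apply: ncard0 => x QNx; have := least N (ex_intro _ x QNx); lia.
Qed.

Lemma least_unique (P : int -> Prop) a b : is_least P a -> is_least P b -> a = b.
Proof. by move=> [Pa least_a] [Pb least_b]; have := least_a _ Pb; have := least_b _ Pa; lia. Qed.

Lemma delta_reindex (S T : int -> nat) (k L : int) :
  L <= k -> (forall N, N < k -> S N = 0%N) -> (forall N, N <= k -> T N = 0%N) ->
  (forall N, k < N -> S N = T N) <->
  (forall i : nat,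
     (S (i%:Z + L))%:Z - (T (i%:Z + L))%:Z = (S k)%:Z * (i == absz (k - L))%:R).
Proof.
move=> Lk S0 T0; split => [ST i|ST N kN].
  case: (ltgtP (i%:Z + L) k) => [lt|gt|eq].
  - have -> : (i == absz (k - L)) = false by apply/eqP; lia.
    by rewrite S0 // T0 ?ltW // mulr0.
  - have -> : (i == absz (k - L)) = false by apply/eqP; lia.
    by rewrite ST // subrr mulr0.
  - have -> : (i == absz (k - L)) by apply/eqP; lia.
    by rewrite eq T0 // subr0 mulr1.
have := ST (absz (N - L)); have -> : (absz (N - L))%:Z + L = N by lia.
have -> : (absz (N - L) == absz (k - L)) = false by apply/eqP; lia.
by rewrite mulr0; lia.
Qed.

Lemma shift_reindex (a e : int -> int) (c k L : int) :
  L <= k -> (forall N, N < L -> a N = 0) -> (forall n, n < 0 -> e n = 0) ->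
  (forall N, a N = c * e (N - k)) <->
  (forall i : nat, a (i%:Z + L) =
     if (i < absz (k - L))%N then 0 else c * e (i - absz (k - L))%N%:Z).
Proof.
move=> Lk a0 e0; split => [aE i|aE N].
  by rewrite aE; case: ltnP => iK; [rewrite e0 ?mulr0 | congr (c * e _)]; lia.
have [NL|LN] := ltP N L; first by rewrite a0 // e0 ?mulr0 //; lia.
have := aE (absz (N - L)); have -> : (absz (N - L))%:Z + L = N by lia.
by move=> ->; case: ltnP => iK; [rewrite e0 ?mulr0 | congr (c * e _)]; lia.
Qed.

Lemma uv_iff (t : nat) (C A B : 'I_t -> int) (m k : int) :
  (forall N, u_N C A k N = v_N C A B m k N) <->
  (forall N, (ncard (Dset C A 0 N))%:Z - (ncard (Dset C B m N))%:Z =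
             (ncard (PDset C A 0 k))%:Z * pent_excess C (N - k)).
Proof.
have shift b N : ncard (Fset C b k N) = ncard (Fset C b 0 (N - k)).
  by apply: ncard_ext => f; rewrite /Fset; split => -[ob e]; split => //; lia.
rewrite /u_N /v_N /pent_excess; split => uv N; have := uv N; rewrite !shift; nia.
Qed.

(* The theorem: reindex both sides from the offset [L], then divide by the partition
   series using the pentagonal theorem. *)
Theorem lemma3p8 (t : nat) (C A B : 'I_t -> int) (m k : int) :
  (1 <= t)%N ->
  (forall i, 1 <= C i) ->
  (forall i, 0 <= A i /\ 2 * A i <= C i) ->
  (forall i, 0 <= B i /\ 2 * B i <= C i) ->
  (exists N0, is_least (fun N => exists x, PDset C B m N x) N0 /\
              is_second_least (fun N => exists x, PDset C A 0 N x) N0) ->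
  is_least (fun N => exists x, PDset C A 0 N x) k ->
  ((forall N, k < N -> ncard (PDset C A 0 N) = ncard (PDset C B m N)) <->
   (forall N, u_N C A k N = v_N C A B m k N)).
Proof.
move=> _ C_ge1 A_bounds B_bounds [N0 [T_least [_ [k' [S_least' k'N0 _]]]]] S_least.
have kN0 : k < N0 by rewrite -(least_unique S_least' S_least).
(* An offset below [0], [m] and [k], from which all the counts are nonnegative-indexed. *)
pose L := - `|m| - `|k|.
have Lk : L <= k by lia.
have S0 N : N < k -> ncard (PDset C A 0 N) = 0%N by apply: least_empty S_least.
have T0 N : N <= k -> ncard (PDset C B m N) = 0%N.
  by move=> Nk; apply: least_empty T_least _; lia.
apply: (iff_trans (delta_reindex Lk S0 T0)).
have a0 N : N < L -> (ncard (Dset C A 0 N))%:Z - (ncard (Dset C B m N))%:Z = 0.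
  by move=> NL; rewrite (Dset_empty C_ge1 A_bounds) ?(Dset_empty C_ge1 B_bounds) //; lia.
have e0 n : n < 0 -> pent_excess C n = 0.
  by move=> n0; rewrite /pent_excess !(Fset_empty C_ge1).
apply: (iff_trans _ (iff_sym (uv_iff _ _ _ _ _))).
apply: (iff_trans _ (iff_sym (shift_reindex _ Lk a0 e0))).
apply: (conv_solve _ _ (pentagonal_conv C_ge1)) => i.
by rewrite (PDset_conv C_ge1 A_bounds) ?(PDset_conv C_ge1 B_bounds) -?convBr //; lia.
Qed.
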